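(* Consider the modification of MultiQT in which the forecast is $q_t=\textsc{Sort}(b_t+\tilde\theta_t)$ and the hidden offsets are updated by $\tilde\theta_{t+1}^{\alpha}=\tilde\theta_t^{\alpha}-\eta(\mathbb{1}\{y_t\le q_t^{\alpha}\}-\alpha)$ for each $\alpha\in\mathcal{A}$. There exist a set of levels $\mathcal{A}$ and a sequence $(y_t,b_t)$ with $|y_t-b_t^{\alpha}|<R$ for all $\alpha,t$ (for some $R>0$) such that for some $\alpha\in\mathcal{A}$, $\lim_{T\to\infty}\frac1T\sum_{t=1}^T\mathbb{1}\{y_t\le q_t^{\alpha}\}\ne\alpha$.
   Context: $\mathcal{A}=\{\alpha_1<\dots<\alpha_m\}\subset(0,1)$ is a set of quantile levels, $\eta>0$ a learning rate, base forecasts $b_t$ have nondecreasing entries, and $\textsc{Sort}(v)$ is the vector whose $i$-th entry is the $i$-th smallest entry of $v$. *)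

From HB Require Import structures.
From mathcomp Require Import all_boot all_order all_algebra.
From mathcomp Require Import all_classical all_reals all_analysis.
Set Implicit Arguments. Unset Strict Implicit. Unset Printing Implicit Defensive.
Import Order.TTheory GRing.Theory Num.Theory.
Local Open Scope ring_scope.

Definition sortv {R : realType} {m : nat} (v : 'I_m -> R) (i : 'I_m) : R :=
  nth 0 (sort <=%R [seq v j | j <- enum 'I_m]) i.

(* Hidden offsets of the modified MultiQT; time t = 0 here is t = 1 in the
   paper; initial offsets are 0. *)
Fixpoint mqt_theta {R : realType} {m : nat} (A : 'I_m -> R) (eta : R)
  (y : nat -> R) (b : nat -> 'I_m -> R) (t : nat) : 'I_m -> R :=
  match t with
  | 0 => fun _ => 0
  | t'.+1 =>
      let th := mqt_theta A eta y b t' in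
      let q := sortv (fun j => b t' j + th j) in
      fun a => th a - eta * (((y t' <= q a)%R : nat)%:R - A a)
  end.

Definition mqt_q {R : realType} {m : nat} (A : 'I_m -> R) (eta : R)
  (y : nat -> R) (b : nat -> 'I_m -> R) (t : nat) : 'I_m -> R :=
  sortv (fun j => b t j + mqt_theta A eta y b t j).

Definition mqt_cov {R : realType} {m : nat} (A : 'I_m -> R) (eta : R)
  (y : nat -> R) (b : nat -> 'I_m -> R) (a : 'I_m) (T : nat) : R :=
  (\sum_(t < T) ((y t <= mqt_q A eta y b t a)%R : nat)%:R) / T%:R.

From HB Require Import structures.
From mathcomp Require Import all_boot all_order all_algebra.
From mathcomp Require Import all_classical all_reals all_analysis.
From mathcomp Require Import lra.
Set Implicit Arguments. Unset Strict Implicit. Unset Printing Implicit Defensive.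
Import Order.TTheory GRing.Theory Num.Theory numFieldNormedType.Exports.
Local Open Scope classical_set_scope.
Local Open Scope ring_scope.

(* Take levels 1/4 < 3/4, outcomes y_t = 0 and base forecasts (-eta/8, eta/8).
   Then b_t + theta_t always has the form (-x, x) with x != 0, so after
   sorting level 1/4 gets the negative forecast and level 3/4 the positive
   one.  Level 1/4 thus never covers y_t and its offset grows by eta/4 per
   step, while that of level 3/4 shrinks by eta/4; the unsorted vector keeps
   the shape (-x, x), and the coverage of level 1/4 stays 0 forever. *)

Lemma cvg_cst_uniq (R : numFieldType) (f : nat -> R) (c l : R) :
  f =1 (fun=> c) -> f @ \oo --> l -> l = c.
Proof. by move=> /funext -> /(norm_cvg_unique (cvg_cst c)). Qed.

Lemma sortv_ord2 (R : realType) (v : 'I_2 -> R) :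
  sortv v ord0 = Num.min (v ord0) (v ord_max) /\
  sortv v ord_max = Num.max (v ord0) (v ord_max).
Proof.
rewrite /sortv enum_ordSl enum_ordSl enum_ord0 /= /sort /=.
have -> : lift ord0 ord0 = ord_max :> 'I_2 by apply/val_inj.
by case: leP.
Qed.

Definition pm2 {R : zmodType} (x : R) : 'I_2 -> R :=
  fun j => if val j == 0%N then - x else x.

Lemma pm2D (R : zmodType) (x y : R) (j : 'I_2) :
  pm2 x j + pm2 y j = pm2 (x + y) j.
Proof. by rewrite /pm2; case: ifP; rewrite ?opprD. Qed.

Lemma pm2_le (R : numDomainType) (x : R) (i j : 'I_2) :
  0 <= x -> (i <= j)%N -> pm2 x i <= pm2 x j.
Proof.
move=> x_ge0; rewrite /pm2.
by case: i j => [[|[|i]] Hi] [[|[|j]] Hj] //= _; rewrite ?lexx // ge0_cp.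
Qed.

Lemma normr_pm2 (R : numDomainType) (x : R) (j : 'I_2) : `|pm2 x j| = `|x|.
Proof. by rewrite /pm2; case: ifP; rewrite ?normrN. Qed.

Lemma sortv_pm2 (R : realType) (x : R) : x != 0 ->
  sortv (pm2 x) ord0 < 0 /\ 0 < sortv (pm2 x) ord_max.
Proof.
move=> x_neq0; have [-> ->] := sortv_ord2 (pm2 x).
rewrite /pm2 /= gt_min lt_max oppr_lt0 oppr_gt0.
by case: (ltrgtP x 0) x_neq0 => // _ _; rewrite orbT.
Qed.

Section TwoLevelCounterexample.
Variables (R : realType) (eta : R).
Hypothesis eta_gt0 : 0 < eta.

Definition levels : 'I_2 -> R := fun j => if val j == 0%N then 1/4 else 3/4.
Definition base (t : nat) : 'I_2 -> R := pm2 (eta / 8).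
Definition outcome (t : nat) : R := 0.
Definition drift (t : nat) : R := eta * t%:R / 4.

Lemma driftS t : drift t.+1 = drift t + eta / 4.
Proof. by rewrite /drift -natr1 mulrDr mulr1 mulrDl. Qed.

Lemma subr_drift_neq0 (t : nat) : eta / 8 - drift t != 0.
Proof.
have drift_ge0 k : 0 <= drift k by rewrite /drift divr_ge0 // mulr_ge0 // ltW.
case: t => [|t]; first by rewrite /drift mulr0 mul0r subr0 gt_eqF ?divr_gt0.
by rewrite driftS lt_eqF //; have := drift_ge0 t; move: eta_gt0; lra.
Qed.

Lemma mqt_theta_counterexample (t : nat) :
  mqt_theta levels eta outcome base t = pm2 (- drift t).
Proof.
elim: t => [|t IH] /=.
  by apply/funext => j; rewrite /pm2 /drift /= mulr0 mul0r !oppr0 if_same.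
rewrite [in sortv _]IH (funext (fun j => pm2D _ _ j)).
have [q0_lt0 qmax_gt0] := sortv_pm2 (subr_drift_neq0 t).
apply/funext => -[[|[|k]] Hk] //=.
- have -> : Ordinal Hk = ord0 by apply/val_inj.
  by rewrite IH /outcome lt_geF // /pm2 /levels /= driftS; lra.
- have -> : Ordinal Hk = ord_max by apply/val_inj.
  by rewrite IH /outcome ltW // /pm2 /levels /= driftS; lra.
Qed.

Lemma mqt_cov_counterexample (T : nat) :
  mqt_cov levels eta outcome base ord0 T = 0.
Proof.
rewrite /mqt_cov big1 ?mul0r // => t _.
rewrite /mqt_q mqt_theta_counterexample (funext (fun j => pm2D _ _ j)).
by have [q0_lt0 _] := sortv_pm2 (subr_drift_neq0 t); rewrite /outcome lt_geF.
Qed.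

End TwoLevelCounterexample.

Theorem proposition13 (R : realType) (eta : R) (heta : 0 < eta) :
  exists (m : nat) (A : 'I_m -> R),
    (forall i j : 'I_m, (i < j)%N -> A i < A j) /\
    (forall i : 'I_m, 0 < A i < 1) /\
    exists (y : nat -> R) (b : nat -> 'I_m -> R) (Rb : R),
      (forall t (i j : 'I_m), (i <= j)%N -> b t i <= b t j) /\
      0 < Rb /\
      (forall t (a : 'I_m), `|y t - b t a| < Rb) /\
      exists a : 'I_m, ~ (mqt_cov A eta y b a @ \oo --> A a).
Proof.
exists 2%N, (levels R); split.
  by move=> [[|[|i]] Hi] [[|[|j]] Hj] //= _; rewrite /levels /=; lra.
split.
  by move=> [[|[|i]] Hi] //=; rewrite /levels /=; apply/andP; split; lra.
exists (outcome R), (base eta), eta; split.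
  by move=> t i j; apply: pm2_le; rewrite divr_ge0 // ltW.
split => //; split.
  move=> t j; rewrite /outcome sub0r normrN normr_pm2 gtr0_norm ?divr_gt0 //.
  by move: heta; lra.
exists ord0 => /(cvg_cst_uniq (mqt_cov_counterexample heta)).
by rewrite /levels /=; lra.
Qed.
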